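(* Let $L$ be a frame. The category $L$-$\mathbf{SLSCSob}$, whose objects are the strong locally super-compact $L$-sober spaces and whose morphisms are continuous maps, is isomorphic to the category $L$-$\mathbf{AlgDom}$, whose objects are the algebraic $L$-dcpo's and whose morphisms are Scott continuous maps.
   Context: $L$ is a frame with implication $\to$. An $L$-subset of $X$ is a map $X\to L$; it is nonempty if $\bigvee_xA(x)=1$; $a_X$ is the constant $L$-subset with value $a$. ${\rm sub}_X(A,B)=\bigwedge_x A(x)\to B(x)$. $f^\rightarrow(A)(y)=\bigvee_{f(x)=y}A(x)$, $f^\leftarrow(B)=B\circ f$. An $L$-topology on $X$ is $\mathcal O(X)\subseteq L^X$ closed under finite meets and arbitrary joins containing all constants $a_X$; members are open. A map is continuous if $f^\leftarrow$ maps open sets to open sets. A base is $\mathcal B\subseteq\mathcal O(X)$ with $A=\bigvee_{B\in\mathcal B}{\rm sub}_X(B,A)\wedge B$ for every open $A$. An $L$-order on $P$: $e:P\times P\to L$ with $e(x,x)=1$, $e(x,y)\wedge e(y,z)\le e(x,z)$, $e(x,y)\wedge e(y,x)=1\Rightarrow x=y$. ${\downarrow}y(x)=e(x,y)$. $x=\sqcup A$ if $e(x,y)={\rm sub}_P(A,{\downarrow}y)$ for all $y$. Directed: nonempty and $D(x)\wedge D(y)\le\bigvee_z D(z)\wedge e(x,z)\wedge e(y,z)$; ideal = directed lower set ($I(x)\wedge e(y,x)\le I(y)$). $L$-dcpo: every directed $L$-subset has a supremum. Scott continuous $f$: for every directed $D$ with a supremum, $f^\rightarrow(D)$ has a supremum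 and $f(\sqcup D)=\sqcup f^\rightarrow(D)$. ${\Downarrow}x(y)=\bigwedge\{e(x,\sqcup I)\to I(y): I\text{ ideal with a supremum}\}$. In an $L$-dcpo $P$, $x$ is compact if ${\Downarrow}x(x)=1$; $K(P)$ is the set of compact elements; $k(x)\in L^P$ is $k(x)(y)=e(y,x)$ for $y\in K(P)$ and $0$ otherwise; $P$ is an algebraic $L$-dcpo if each $k(x)$ is directed and $\sqcup k(x)=x$. A super-compact $L$-subset is a nonempty $A$ with ${\rm sub}_X(A,\bigvee_iV_i)=\bigvee_i{\rm sub}_X(A,V_i)$ for every family of open $V_i$. $X$ is strong locally super-compact if it has a base consisting of super-compact open sets. A point of $\mathcal O(X)$ is $p:\mathcal O(X)\to L$ preserving binary meets, arbitrary joins, and with $p(\lambda_X)=\lambda$ for all $\lambda\in L$. $[x](A)=A(x)$. $X$ is $L$-sober if $x\mapsto[x]$ is a bijection onto the set of points. *)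

Record frame := Frame {
  fcar :> Type;
  fle : fcar -> fcar -> Prop;
  fmeet : fcar -> fcar -> fcar;
  fsup : (fcar -> Prop) -> fcar;
  fle_refl : forall a, fle a a;
  fle_trans : forall a b c, fle a b -> fle b c -> fle a c;
  fle_antisym : forall a b, fle a b -> fle b a -> a = b;
  fmeet_lb1 : forall a b, fle (fmeet a b) a;
  fmeet_lb2 : forall a b, fle (fmeet a b) b;
  fmeet_glb : forall a b c, fle c a -> fle c b -> fle c (fmeet a b);
  fsup_ub : forall (S : fcar -> Prop) a, S a -> fle a (fsup S);
  fsup_least : forall (S : fcar -> Prop) c,
      (forall a, S a -> fle a c) -> fle (fsup S) c;
  fdistr : forall a (S : fcar -> Prop),
      fmeet a (fsup S) = fsup (fun b => exists c, S c /\ b = fmeet a c)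
}.

Section FrameOps.
Variable L : frame.

Definition ftop : L := fsup L (fun _ => True).
Definition fbot : L := fsup L (fun _ => False).
Definition finf (S : L -> Prop) : L :=
  fsup L (fun c => forall a, S a -> fle L c a).
Definition fimp (a b : L) : L := fsup L (fun c => fle L (fmeet L c a) b).

Definition fjoin {I : Type} (f : I -> L) : L := fsup L (fun a => exists i, a = f i).
Definition fmeetI {I : Type} (f : I -> L) : L := finf (fun a => exists i, a = f i).
End FrameOps.

Arguments ftop {L}.
Arguments fbot {L}.
Arguments finf {L}.
Arguments fimp {L}.
Arguments fjoin {L I}.
Arguments fmeetI {L I}.

Section LSubsets.
Variable L : frame.

Definition Lnonempty {X : Type} (A : X -> L) : Prop := fjoin A = ftop.
Definition Lconst (X : Type) (a : L) : X -> L := fun _ => a.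
Definition Lsub {X : Type} (A B : X -> L) : L := fmeetI (fun x => fimp (A x) (B x)).
Definition Lfwd {X Y : Type} (f : X -> Y) (A : X -> L) : Y -> L :=
  fun y => fjoin (fun x : {x : X | f x = y} => A (proj1_sig x)).
Definition Lbwd {X Y : Type} (f : X -> Y) (B : Y -> L) : X -> L := fun x => B (f x).
Definition Lsupset {X : Type} (S : (X -> L) -> Prop) : X -> L :=
  fun x => fsup L (fun a => exists A, S A /\ a = A x).
Definition Lmeet2 {X : Type} (A B : X -> L) : X -> L := fun x => fmeet L (A x) (B x).

Definition is_Ltopology {X : Type} (O : (X -> L) -> Prop) : Prop :=
  (forall A B, O A -> O B -> O (Lmeet2 A B)) /\
  (forall S : (X -> L) -> Prop, (forall A, S A -> O A) -> O (Lsupset S)) /\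
  (forall a : L, O (Lconst X a)).

Definition Lcontinuous {X Y : Type} (OX : (X -> L) -> Prop) (OY : (Y -> L) -> Prop)
  (f : X -> Y) : Prop := forall B, OY B -> OX (Lbwd f B).

Definition is_base {X : Type} (O : (X -> L) -> Prop) (Bs : (X -> L) -> Prop) : Prop :=
  (forall B, Bs B -> O B) /\
  (forall A, O A -> forall x,
     A x = fjoin (fun B : {B : X -> L | Bs B} =>
                    fmeet L (Lsub (proj1_sig B) A) (proj1_sig B x))).

(* super-compact L-subset; a family of open sets is given by its set of members *)
Definition super_compact {X : Type} (O : (X -> L) -> Prop) (A : X -> L) : Prop :=
  Lnonempty A /\
  forall S : (X -> L) -> Prop, (forall V, S V -> O V) ->
    Lsub A (Lsupset S) = fjoin (fun V : {V : X -> L | S V} => Lsub A (proj1_sig V)).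

Definition strong_loc_super_compact {X : Type} (O : (X -> L) -> Prop) : Prop :=
  exists Bs, is_base O Bs /\ (forall B, Bs B -> O B /\ super_compact O B).

(* points of O(X): maps O(X) -> L (represented by maps on all L-subsets,
   only their values on open sets matter) *)
Definition is_point {X : Type} (O : (X -> L) -> Prop) (p : (X -> L) -> L) : Prop :=
  (forall A B, O A -> O B -> p (Lmeet2 A B) = fmeet L (p A) (p B)) /\
  (forall S : (X -> L) -> Prop, (forall A, S A -> O A) ->
     p (Lsupset S) = fsup L (fun a => exists A, S A /\ a = p A)) /\
  (forall l : L, p (Lconst X l) = l).

(* L-sober: x |-> [x] is a bijection onto the set of points
   (points being maps on O(X), compared on open sets) *)
Definition Lsober {X : Type} (O : (X -> L) -> Prop) : Prop :=
  (forall x y : X, (forall A, O A -> A x = A y) -> x = y) /\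
  (forall p, is_point O p -> exists x : X, forall A, O A -> p A = A x).

Definition is_Lorder {P : Type} (e : P -> P -> L) : Prop :=
  (forall x, e x x = ftop) /\
  (forall x y z, fle L (fmeet L (e x y) (e y z)) (e x z)) /\
  (forall x y, fmeet L (e x y) (e y x) = ftop -> x = y).

Definition Ldown {P : Type} (e : P -> P -> L) (y : P) : P -> L := fun x => e x y.

Definition is_Lsup {P : Type} (e : P -> P -> L) (A : P -> L) (x : P) : Prop :=
  forall y, e x y = Lsub A (Ldown e y).

Definition Ldirected {P : Type} (e : P -> P -> L) (D : P -> L) : Prop :=
  Lnonempty D /\
  forall x y, fle L (fmeet L (D x) (D y))
                    (fjoin (fun z => fmeet L (D z) (fmeet L (e x z) (e y z)))).

Definition Lideal {P : Type} (e : P -> P -> L) (I : P -> L) : Prop :=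
  Ldirected e I /\ forall x y, fle L (fmeet L (I x) (e y x)) (I y).

Definition Ldcpo {P : Type} (e : P -> P -> L) : Prop :=
  forall D, Ldirected e D -> exists x, is_Lsup e D x.

Definition Scott_continuous {P Q : Type} (e : P -> P -> L) (e' : Q -> Q -> L)
  (f : P -> Q) : Prop :=
  forall D, Ldirected e D -> forall x, is_Lsup e D x ->
    exists s, is_Lsup e' (Lfwd f D) s /\ f x = s.

Definition Lwaybelow {P : Type} (e : P -> P -> L) (x y : P) : L :=
  finf (fun a => exists I s, Lideal e I /\ is_Lsup e I s /\ a = fimp (e x s) (I y)).

Definition Lcompact {P : Type} (e : P -> P -> L) (x : P) : Prop :=
  Lwaybelow e x x = ftop.

(* k(x)(y) = e(y,x) if y compact, 0 otherwise; written as the join of the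
   subset {e(y,x) | y compact}, which is e(y,x) or the empty join 0 *)
Definition Lk {P : Type} (e : P -> P -> L) (x : P) : P -> L :=
  fun y => fsup L (fun a => Lcompact e y /\ a = e y x).

Definition Lalgebraic {P : Type} (e : P -> P -> L) : Prop :=
  Ldcpo e /\ forall x, Ldirected e (Lk e x) /\ is_Lsup e (Lk e x) x.

End LSubsets.

Record SLSCSob (L : frame) := MkSLSCSob {
  sp_car : Type;
  sp_open : (sp_car -> L) -> Prop;
  sp_top : is_Ltopology L sp_open;
  sp_slsc : strong_loc_super_compact L sp_open;
  sp_sober : Lsober L sp_open
}.
Arguments sp_car {L}.
Arguments sp_open {L}.

Definition SLSCSob_hom {L : frame} (X Y : SLSCSob L) : Type :=
  {f : sp_car X -> sp_car Y | Lcontinuous L (sp_open X) (sp_open Y) f}.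

Record AlgDom (L : frame) := MkAlgDom {
  ad_car : Type;
  ad_ord : ad_car -> ad_car -> L;
  ad_Lorder : is_Lorder L ad_ord;
  ad_alg : Lalgebraic L ad_ord
}.
Arguments ad_car {L}.
Arguments ad_ord {L}.

Definition AlgDom_hom {L : frame} (P Q : AlgDom L) : Type :=
  {f : ad_car P -> ad_car Q | Scott_continuous L (ad_ord P) (ad_ord Q) f}.

(* A category given by objects, homs (concrete: subsets of functions),
   identities and composition being those of functions. *)
Definition bijective_map {A B : Type} (f : A -> B) : Prop :=
  exists g : B -> A, (forall a, g (f a) = a) /\ (forall b, f (g b) = b).

Definition SLSCSob_AlgDom_isomorphic (L : frame) : Prop :=
  exists (Fo : SLSCSob L -> AlgDom L)
         (Fm : forall X Y : SLSCSob L, SLSCSob_hom X Y -> AlgDom_hom (Fo X) (Fo Y)),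
    (forall X (i : SLSCSob_hom X X), (forall x, proj1_sig i x = x) ->
        forall p, proj1_sig (Fm X X i) p = p) /\
    (forall X Y Z (f : SLSCSob_hom X Y) (g : SLSCSob_hom Y Z) (h : SLSCSob_hom X Z),
        (forall x, proj1_sig h x = proj1_sig g (proj1_sig f x)) ->
        forall p, proj1_sig (Fm X Z h) p =
                  proj1_sig (Fm Y Z g) (proj1_sig (Fm X Y f) p)) /\
    bijective_map Fo /\
    (forall X Y, bijective_map (Fm X Y)).

(** For an algebraic L-dcpo [(P, e)], the L-subsets [U] with
    [U x = \/_{c compact} U c /\ e(c, x)] form a topology with base the
    principal filters [e(c, -)] of compact [c], each of them super-compact; its
    specialization order is [e], and a point [p] is [[s]] for the supremum [s]
    of the directed L-subset [c |-> p(e(c, -))] of compact elements.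
    Conversely, a strong locally super-compact L-sober space has the
    specialization order [e(x, y) = /\_{A open} A x -> A y].  A super-compact
    basic open [B] yields the point [sub_X(B, -)], hence [B = e(c, -)] for some
    [c]; a directed [D] yields the point [A |-> \/_x D x /\ A x], hence a
    supremum.  The [c] with [e(c, -)] open are exactly the compact elements, so
    the order is algebraic and its topology is the original one.  The two
    constructions are mutually inverse, and continuity coincides with Scott
    continuity. *)

From Stdlib Require Import FunctionalExtensionality PropExtensionality ProofIrrelevance.

Notation "a ⊑ b" := (fle _ a b) (at level 70).
Notation "a ⊓ b" := (fmeet _ a b) (at level 40, left associativity).

Section FrameFacts.
Context {L : frame}.
Implicit Types a b c X Y : L.

Lemma le_top a : a ⊑ ftop.
Proof. unfold ftop. apply fsup_ub. exact I. Qed.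

Lemma top_le a : ftop ⊑ a -> a = ftop.
Proof. intros H. apply fle_antisym; [apply le_top | exact H]. Qed.

Lemma le_meet_cut X c Y : X ⊑ c -> X ⊓ c ⊑ Y -> X ⊑ Y.
Proof.
  intros H1 H2. eapply fle_trans; [|exact H2].
  apply fmeet_glb; [apply fle_refl | exact H1].
Qed.

Lemma meetC_le a b c : b ⊓ a ⊑ c -> a ⊓ b ⊑ c.
Proof.
  intros H. eapply fle_trans; [|exact H].
  apply fmeet_glb; [apply fmeet_lb2 | apply fmeet_lb1].
Qed.

Lemma le_impI c a b : c ⊓ a ⊑ b -> c ⊑ fimp a b.
Proof. intros H. unfold fimp. apply fsup_ub with (S := fun c => c ⊓ a ⊑ b). exact H. Qed.

Lemma le_impE c a b : c ⊑ fimp a b -> c ⊓ a ⊑ b.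
Proof.
  intros H. apply fle_trans with (a ⊓ fimp a b).
  - apply fmeet_glb; [apply fmeet_lb2 | eapply fle_trans; [apply fmeet_lb1 | exact H]].
  - unfold fimp. rewrite fdistr. apply fsup_least. intros y [z [Hz ->]].
    apply meetC_le, Hz.
Qed.

Lemma join_ub {I} (f : I -> L) i : f i ⊑ fjoin f.
Proof. unfold fjoin. apply fsup_ub with (S := fun a => exists i, a = f i). eauto. Qed.

Lemma le_join {I} (f : I -> L) i X : X ⊑ f i -> X ⊑ fjoin f.
Proof. intros H. eapply fle_trans; [exact H | apply join_ub]. Qed.

Lemma join_le {I} (f : I -> L) c : (forall i, f i ⊑ c) -> fjoin f ⊑ c.
Proof. intros H. unfold fjoin. apply fsup_least. intros a [i ->]. apply H. Qed.

Lemma le_sup (S : L -> Prop) a X : S a -> X ⊑ a -> X ⊑ fsup L S.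
Proof. intros H1 H2. eapply fle_trans; [exact H2 | apply fsup_ub, H1]. Qed.

Lemma join_meet_le {I} (f : I -> L) b c : (forall i, f i ⊓ b ⊑ c) -> fjoin f ⊓ b ⊑ c.
Proof. intros H. apply le_impE, join_le. intros i. apply le_impI, H. Qed.

Lemma meet_join_le {I} (f : I -> L) b c : (forall i, b ⊓ f i ⊑ c) -> b ⊓ fjoin f ⊑ c.
Proof. intros H. apply meetC_le, join_meet_le. intros i. apply meetC_le, H. Qed.

Lemma sup_meet_le (S : L -> Prop) b c :
  (forall a, S a -> a ⊓ b ⊑ c) -> fsup L S ⊓ b ⊑ c.
Proof. intros H. apply le_impE, fsup_least. intros a Ha. apply le_impI, H, Ha. Qed.

Lemma finf_lb (S : L -> Prop) a : S a -> finf S ⊑ a.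
Proof. intros H. unfold finf. apply fsup_least. intros c Hc. apply Hc, H. Qed.

Lemma le_finf (S : L -> Prop) c : (forall a, S a -> c ⊑ a) -> c ⊑ finf S.
Proof.
  intros H. unfold finf. apply fsup_ub with (S := fun c => forall a, S a -> c ⊑ a). exact H.
Qed.

Lemma meetI_lb {I} (f : I -> L) i : fmeetI f ⊑ f i.
Proof. apply finf_lb. eauto. Qed.

Lemma le_meetI {I} (f : I -> L) c : (forall i, c ⊑ f i) -> c ⊑ fmeetI f.
Proof. intros H. apply le_finf. intros a [i ->]. apply H. Qed.

Lemma Lsub_meet_le {P} (A B : P -> L) x : Lsub L A B ⊓ A x ⊑ B x.
Proof. apply le_impE, (meetI_lb (fun x => fimp (A x) (B x))). Qed.

Lemma le_Lsub {P} (A B : P -> L) c : (forall x, c ⊓ A x ⊑ B x) -> c ⊑ Lsub L A B.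
Proof. intros H. apply le_meetI. intros x. apply le_impI, H. Qed.
End FrameFacts.

(** [solve_meet] proves [X ⊑ Y] when every conjunct of [Y] is [ftop] or a
    conjunct of [X]; [add_le H] adds the right-hand side of [H : Z ⊑ W] as a
    conjunct of the left-hand side [X] of the goal, provided [solve_meet]
    proves [X ⊑ Z]; [elim_join i] and [elim_sup a Ha] replace a join occurring
    as a conjunct of the left-hand side by one of its members (distributivity);
    [intro_join i] chooses member [i] of a join on the right-hand side. *)
Ltac solve_meet := solve [ apply fle_refl | apply le_top
  | apply fmeet_glb; solve_meet
  | eapply fle_trans; [apply fmeet_lb1|]; solve_meet
  | eapply fle_trans; [apply fmeet_lb2|]; solve_meet ].
Ltac add_le H := eapply le_meet_cut; [eapply fle_trans; [|apply H]; solve_meet|].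
Ltac intro_join t := apply le_join with (i := t); cbv beta; cbn [proj1_sig].

Tactic Notation "elim_join" simple_intropattern(p) :=
  match goal with |- fle ?Lf ?X ?Y =>
    match X with context C [fjoin ?f] =>
      let X' := context C [@ftop Lf] in
      apply (@fle_trans Lf _ (fmeet Lf (fjoin f) X') _);
      [solve_meet | apply join_meet_le; intros p; cbv beta; cbn [proj1_sig]]
    end end.
Tactic Notation "elim_sup" simple_intropattern(p) simple_intropattern(q) :=
  match goal with |- fle ?Lf ?X ?Y =>
    match X with context C [fsup ?Lg ?S] =>
      let X' := context C [@ftop Lf] in
      apply (@fle_trans Lf _ (fmeet Lf (fsup Lg S) X') _);
      [solve_meet | apply sup_meet_le; intros p q; cbv beta]
    end end.

Definition Lup {L : frame} {P : Type} (e : P -> P -> L) (c : P) : P -> L :=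
  fun x => e c x.

Definition Lupper {L : frame} {P : Type} (e : P -> P -> L) (A : P -> L) : Prop :=
  forall x y, A x ⊓ e x y ⊑ A y.

Definition Ldownset {L : frame} {P : Type} (e : P -> P -> L) (D : P -> L) : P -> L :=
  fun y => fjoin (fun x => D x ⊓ e y x).

Definition Loverlap {L : frame} {P : Type} (D A : P -> L) : L :=
  fjoin (fun x => D x ⊓ A x).

Definition Lmonotone {L : frame} {P Q : Type} (e1 : P -> P -> L) (e2 : Q -> Q -> L)
  (f : P -> Q) : Prop :=
  forall x y, e1 x y ⊑ e2 (f x) (f y).

(** [k(x)] is [compact_restrict e (Ldown e x)], definitionally. *)
Definition compact_restrict {L : frame} {P : Type} (e : P -> P -> L) (g : P -> L) :
  P -> L :=
  fun y => fsup L (fun a => Lcompact L e y /\ a = g y).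

(** The topology generated by the principal filters [e(c, -)] of compact
    elements; for an algebraic L-dcpo it is the Scott topology. *)
Definition scott_open {L : frame} {P : Type} (e : P -> P -> L) (U : P -> L) : Prop :=
  forall x, U x = fjoin (fun c : {c | Lcompact L e c} =>
                           U (proj1_sig c) ⊓ e (proj1_sig c) x).

Definition specialization {L : frame} {X : Type} (O : (X -> L) -> Prop) (x y : X) : L :=
  fmeetI (fun A : {A | O A} => fimp (proj1_sig A x) (proj1_sig A y)).

Section LSubsetFacts.
Context {L : frame}.

Lemma Lfwd_ub {X Y} (f : X -> Y) (D : X -> L) x : D x ⊑ Lfwd L f D (f x).
Proof.
  apply (join_ub (fun x0 : {x0 | f x0 = f x} => D (proj1_sig x0)) (exist _ x eq_refl)).
Qed.

Lemma Lfwd_meet_le {X Y} (f : X -> Y) (D : X -> L) y b c :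
  (forall x, f x = y -> D x ⊓ b ⊑ c) -> Lfwd L f D y ⊓ b ⊑ c.
Proof. intros H. apply join_meet_le. intros [x Hx]. apply H, Hx. Qed.

Context {P : Type} (e : P -> P -> L).

Lemma compact_restrict_le g y : compact_restrict e g y ⊑ g y.
Proof. apply fsup_least. intros a [_ ->]. apply fle_refl. Qed.

Lemma compact_restrict_eq g y : Lcompact L e y -> compact_restrict e g y = g y.
Proof.
  intros H. apply fle_antisym; [apply compact_restrict_le|].
  apply fsup_ub with (S := fun a => Lcompact L e y /\ a = g y). auto.
Qed.

Lemma Lk_eq x y : Lcompact L e y -> Lk L e x y = e y x.
Proof. apply (compact_restrict_eq (Ldown L e x)). Qed.

Lemma compact_restrict_meet_le g y b c :
  (Lcompact L e y -> g y ⊓ b ⊑ c) -> compact_restrict e g y ⊓ b ⊑ c.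
Proof. intros H. apply sup_meet_le. intros a [Hy ->]. auto. Qed.

Lemma compact_ideal_le c I s :
  Lcompact L e c -> Lideal L e I -> is_Lsup L e I s -> e c s ⊑ I c.
Proof.
  intros Hc HI Hs.
  assert (H : ftop ⊑ fimp (e c s) (I c)).
  { unfold Lcompact, Lwaybelow in Hc. rewrite <- Hc. apply finf_lb. eauto. }
  apply le_meet_cut with (fimp (e c s) (I c)).
  - eapply fle_trans; [apply le_top | exact H].
  - apply meetC_le, le_impE, fle_refl.
Qed.
End LSubsetFacts.

Section Topology.
Context {L : frame} {X : Type} (O : (X -> L) -> Prop).

Lemma join_family_Lsupset {I} (a : I -> L) (B : I -> X -> L) :
  (fun x => fjoin (fun i => a i ⊓ B i x))
  = Lsupset L (fun C => exists i, C = Lmeet2 L (Lconst L X (a i)) (B i)).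
Proof.
  apply functional_extensionality. intros x. apply fle_antisym.
  - apply join_le. intros i.
    eapply le_sup; [eexists; split; [exists i; reflexivity | reflexivity]|].
    apply fle_refl.
  - apply fsup_least. intros ? [C [[i ->] ->]]. intro_join i. apply fle_refl.
Qed.

Lemma open_join_family {I} (a : I -> L) (B : I -> X -> L) :
  is_Ltopology L O -> (forall i, O (B i)) -> O (fun x => fjoin (fun i => a i ⊓ B i x)).
Proof.
  intros [Hmeet [Hsup Hconst]] HB. rewrite join_family_Lsupset.
  apply Hsup. intros C [i ->]. apply Hmeet; [apply Hconst | apply HB].
Qed.

Lemma point_join_family p {I} (a : I -> L) (B : I -> X -> L) :
  is_Ltopology L O -> is_point L O p -> (forall i, O (B i)) ->
  p (fun x => fjoin (fun i => a i ⊓ B i x)) = fjoin (fun i => a i ⊓ p (B i)).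
Proof.
  intros [Hmeet [_ Hconst]] [Pmeet [Psup Pconst]] HB.
  assert (Hi : forall i, p (Lmeet2 L (Lconst L X (a i)) (B i)) = a i ⊓ p (B i)).
  { intros i. rewrite Pmeet, Pconst by (apply Hconst || apply HB). reflexivity. }
  rewrite join_family_Lsupset, Psup.
  - apply fle_antisym.
    + apply fsup_least. intros ? [C [[i ->] ->]]. intro_join i. rewrite Hi. apply fle_refl.
    + apply join_le. intros i.
      eapply le_sup; [eexists; split; [exists i; reflexivity | reflexivity]|].
      rewrite Hi. apply fle_refl.
  - intros C [i ->]. apply Hmeet; [apply Hconst | apply HB].
Qed.
End Topology.

Lemma super_compact_point {L : frame} {X : Type} (O : (X -> L) -> Prop) B :
  super_compact L O B -> is_point L O (Lsub L B).
Proof.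
  intros [Hne Hsc]. split; [|split].
  - intros A1 A2 _ _. apply fle_antisym.
    + apply fmeet_glb; apply le_Lsub; intros z;
        (eapply fle_trans; [apply (Lsub_meet_le B (Lmeet2 L A1 A2) z)|]); solve_meet.
    + apply le_Lsub. intros z. apply fmeet_glb.
      * add_le (Lsub_meet_le B A1 z). solve_meet.
      * add_le (Lsub_meet_le B A2 z). solve_meet.
  - intros S HS. rewrite (Hsc S HS). apply fle_antisym.
    + apply join_le. intros [V HV].
      eapply le_sup; [exists V; split; [exact HV | reflexivity]|]. apply fle_refl.
    + apply fsup_least. intros a [V [HV ->]]. intro_join (exist _ V HV). apply fle_refl.
  - intros l. apply fle_antisym.
    + apply le_meet_cut with (fjoin B); [rewrite Hne; apply le_top|].
      apply meet_join_le. intros z. apply (Lsub_meet_le B (Lconst L X l) z).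
    + apply le_Lsub. intros z. solve_meet.
Qed.

Section Specialization.
Context {L : frame} {X : Type} (O : (X -> L) -> Prop).
Local Notation e := (specialization O).

Lemma open_upper A : O A -> Lupper e A.
Proof.
  intros HA x y. apply meetC_le, le_impE.
  apply (meetI_lb (fun B : {B | O B} => fimp (proj1_sig B x) (proj1_sig B y)) (exist _ A HA)).
Qed.

Lemma le_specialization x y c : (forall A, O A -> c ⊓ A x ⊑ A y) -> c ⊑ e x y.
Proof. intros H. apply le_meetI. intros [A HA]. apply le_impI, H, HA. Qed.

Lemma specialization_Lorder : Lsober L O -> is_Lorder L e.
Proof.
  intros [Hinj _]. split; [|split].
  - intros x. apply top_le, le_specialization. intros A _. solve_meet.
  - intros x y z. apply le_specialization. intros A HA.
    add_le (open_upper A HA x y). add_le (open_upper A HA y z). solve_meet.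
  - intros x y H. apply Hinj. intros A HA.
    assert (Hxy : e x y = ftop) by (apply top_le; rewrite <- H; solve_meet).
    assert (Hyx : e y x = ftop) by (apply top_le; rewrite <- H; solve_meet).
    apply fle_antisym.
    + eapply fle_trans; [|apply (open_upper A HA x y)]. rewrite Hxy. solve_meet.
    + eapply fle_trans; [|apply (open_upper A HA y x)]. rewrite Hyx. solve_meet.
Qed.

Lemma super_compact_Lup B :
  Lsober L O -> O B -> super_compact L O B -> exists c, B = Lup e c.
Proof.
  intros [_ Hsurj] HBo HB.
  destruct (Hsurj _ (super_compact_point O B HB)) as [c Hc]. exists c.
  apply functional_extensionality. intros z. apply fle_antisym.
  - apply le_specialization. intros A HA. rewrite <- (Hc A HA).
    apply meetC_le, Lsub_meet_le.
  - assert (HBc : B c = ftop).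
    { rewrite <- (Hc B HBo). apply top_le, le_Lsub. intros w. solve_meet. }
    apply le_meet_cut with (B c); [rewrite HBc; apply le_top|].
    apply meetC_le, (open_upper B HBo).
Qed.
End Specialization.

Section LOrder.
Context {L : frame} {P : Type} (e : P -> P -> L) (Ho : is_Lorder L e).

Lemma le_Lord_refl Z x : Z ⊑ e x x.
Proof. destruct Ho as [Hrefl _]. rewrite Hrefl. apply le_top. Qed.

Lemma Lord_trans x y z : e x y ⊓ e y z ⊑ e x z.
Proof. apply Ho. Qed.

Lemma Lord_antisym x y : e x y = ftop -> e y x = ftop -> x = y.
Proof. intros H1 H2. apply Ho. rewrite H1, H2. apply top_le. solve_meet. Qed.

Lemma Lsub_Lup A c : Lupper e A -> Lsub L (Lup e c) A = A c.
Proof.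
  intros HA. apply fle_antisym.
  - add_le (le_Lord_refl ftop c). apply (Lsub_meet_le (Lup e c) A c).
  - apply le_Lsub. intros x. apply HA.
Qed.

Lemma Lsup_ub D s x : is_Lsup L e D s -> D x ⊑ e x s.
Proof.
  intros H. add_le (le_Lord_refl ftop s). rewrite H.
  apply meetC_le, (Lsub_meet_le D (Ldown L e s) x).
Qed.

Lemma Lsup_meet_le D s x y : is_Lsup L e D s -> e s y ⊓ D x ⊑ e x y.
Proof. intros H. rewrite H. apply (Lsub_meet_le D (Ldown L e y)). Qed.

Lemma le_Lsup D s y c : is_Lsup L e D s -> (forall x, c ⊓ D x ⊑ e x y) -> c ⊑ e s y.
Proof. intros H Hc. rewrite H. apply le_Lsub, Hc. Qed.

Lemma Lsup_unique D s s' : is_Lsup L e D s -> is_Lsup L e D s' -> s = s'.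
Proof.
  intros H1 H2. apply Lord_antisym; apply top_le.
  - apply (le_Lsup D s s' ftop H1). intros x.
    eapply fle_trans; [apply fmeet_lb2 | exact (Lsup_ub D s' x H2)].
  - apply (le_Lsup D s' s ftop H2). intros x.
    eapply fle_trans; [apply fmeet_lb2 | exact (Lsup_ub D s x H1)].
Qed.

Lemma le_directed_join D Z : Ldirected L e D -> Z ⊑ fjoin D.
Proof. intros [Hne _]. unfold Lnonempty in Hne. rewrite Hne. apply le_top. Qed.

Lemma directed_meet_le D x y : Ldirected L e D ->
  D x ⊓ D y ⊑ fjoin (fun z => D z ⊓ (e x z ⊓ e y z)).
Proof. intros [_ H]. apply H. Qed.

Lemma Ldownset_ge D x : D x ⊑ Ldownset e D x.
Proof. intro_join x. apply fmeet_glb; [apply fle_refl | apply le_Lord_refl]. Qed.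

Lemma Ldownset_ideal D : Ldirected L e D -> Lideal L e (Ldownset e D).
Proof.
  intros HD. split; [split|].
  - apply top_le. eapply fle_trans; [apply (le_directed_join D _ HD)|].
    apply join_le. intros x. eapply fle_trans; [apply Ldownset_ge | apply join_ub].
  - intros y y'. unfold Ldownset. elim_join x. elim_join x'.
    add_le (directed_meet_le D x x' HD). elim_join z. intro_join z. apply fmeet_glb.
    + intro_join z. apply fmeet_glb; [solve_meet | apply le_Lord_refl].
    + apply fmeet_glb.
      * add_le (Lord_trans y x z). solve_meet.
      * add_le (Lord_trans y' x' z). solve_meet.
  - intros x y. unfold Ldownset. elim_join z. intro_join z.
    apply fmeet_glb; [solve_meet|]. add_le (Lord_trans y x z). solve_meet.
Qed.

Lemma Ldownset_sup D s : is_Lsup L e D s -> is_Lsup L e (Ldownset e D) s.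
Proof.
  intros H y. apply fle_antisym.
  - apply le_Lsub. intros z. unfold Ldown, Ldownset. elim_join x.
    add_le (Lsup_meet_le D s x y H). add_le (Lord_trans z x y). solve_meet.
  - apply (le_Lsup D); auto. intros x. add_le (Ldownset_ge D x).
    eapply fle_trans; [|apply (Lsub_meet_le (Ldownset e D) (Ldown L e y) x)]. solve_meet.
Qed.

Lemma Ldown_directed x : Ldirected L e (Ldown L e x).
Proof.
  split.
  - apply top_le. intro_join x. apply le_Lord_refl.
  - intros y z. intro_join x. apply fmeet_glb; [apply le_Lord_refl | solve_meet].
Qed.

Lemma Ldown_sup x : is_Lsup L e (Ldown L e x) x.
Proof.
  intros y. apply fle_antisym.
  - apply le_Lsub. intros z. apply meetC_le, Lord_trans.
  - eapply fle_trans; [|apply (Lsub_meet_le (Ldown L e x) (Ldown L e y) x)].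
    apply fmeet_glb; [apply fle_refl | apply le_Lord_refl].
Qed.
End LOrder.

Section ScottTopology.
Context {L : frame} {P : Type} (e : P -> P -> L).
Local Notation K := (Lcompact L e).

Lemma scott_open_eta A :
  scott_open e A ->
  A = (fun x => fjoin (fun c : {c | K c} => A (proj1_sig c) ⊓ Lup e (proj1_sig c) x)).
Proof. intros HA. apply functional_extensionality, HA. Qed.

Lemma scott_open_open (O : (P -> L) -> Prop) A :
  is_Ltopology L O -> (forall c, K c -> O (Lup e c)) -> scott_open e A -> O A.
Proof.
  intros Htop HO HA. rewrite (scott_open_eta A HA).
  apply open_join_family; [exact Htop|]. intros [c Hc]. apply HO, Hc.
Qed.

Lemma scott_open_compact_le U c x : scott_open e U -> K c -> U c ⊓ e c x ⊑ U x.
Proof. intros HU Hc. rewrite (HU x). intro_join (exist _ c Hc). apply fle_refl. Qed.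

Context (Ho : is_Lorder L e) (Halg : Lalgebraic L e).

Lemma Lk_directed x : Ldirected L e (Lk L e x).
Proof. apply Halg. Qed.

Lemma Lk_sup x : is_Lsup L e (Lk L e x) x.
Proof. apply Halg. Qed.

Lemma le_join_compact Z x : Z ⊑ fjoin (fun c : {c | K c} => e (proj1_sig c) x).
Proof.
  eapply fle_trans; [apply (le_directed_join e (Lk L e x) Z (Lk_directed x))|].
  apply join_le. intros y. apply fsup_least. intros a [Hy ->].
  intro_join (exist _ y Hy). apply fle_refl.
Qed.

Lemma compact_directed x c d : K c -> K d ->
  e c x ⊓ e d x ⊑ fjoin (fun b : {b | K b} =>
                           e (proj1_sig b) x ⊓ (e c (proj1_sig b) ⊓ e d (proj1_sig b))).
Proof.
  intros Hc Hd.
  rewrite <- (Lk_eq e x c Hc), <- (Lk_eq e x d Hd).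
  eapply fle_trans; [apply (directed_meet_le e (Lk L e x) c d (Lk_directed x))|].
  apply join_le. intros z. apply (compact_restrict_meet_le e (Ldown L e x)). intros Hz.
  intro_join (exist _ z Hz). apply fle_refl.
Qed.

Lemma le_Lord_compact m x y : (forall c, K c -> m ⊓ e c x ⊑ e c y) -> m ⊑ e x y.
Proof.
  intros H. apply (le_Lsup e (Lk L e x) x y m (Lk_sup x)).
  intros z. apply meetC_le, (compact_restrict_meet_le e (Ldown L e x)). intros Hz.
  apply meetC_le, H, Hz.
Qed.

Lemma scott_open_upper U : scott_open e U -> Lupper e U.
Proof.
  intros HU x y. rewrite (HU x). elim_join [c Hc]. add_le (Lord_trans e Ho c x y).
  eapply fle_trans; [|apply (scott_open_compact_le U c y HU Hc)]. solve_meet.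
Qed.

(** Compact elements below a directed supremum are caught by the ideal
    generated by the directed set. *)
Lemma scott_open_directed_sup U D s : scott_open e U -> Ldirected L e D ->
  is_Lsup L e D s -> U s = Loverlap D U.
Proof.
  intros HU HD Hs. apply fle_antisym.
  - rewrite (HU s). elim_join [c Hc].
    add_le (compact_ideal_le e c (Ldownset e D) s Hc (Ldownset_ideal e Ho D HD)
              (Ldownset_sup e Ho D s Hs)).
    unfold Ldownset. elim_join x. intro_join x. apply fmeet_glb; [solve_meet|].
    eapply fle_trans; [|apply (scott_open_compact_le U c x HU Hc)]. solve_meet.
  - apply join_le. intros x. add_le (Lsup_ub e Ho D s x Hs).
    eapply fle_trans; [|apply (scott_open_upper U HU x s)]. solve_meet.
Qed.

Lemma scott_open_Lup c : K c -> scott_open e (Lup e c).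
Proof.
  intros Hc x. apply fle_antisym.
  - intro_join (exist _ c Hc). apply fmeet_glb; [apply le_Lord_refl, Ho | apply fle_refl].
  - apply join_le. intros [d Hd]. apply (Lord_trans e Ho).
Qed.

Lemma scott_open_meet U V : scott_open e U -> scott_open e V -> scott_open e (Lmeet2 L U V).
Proof.
  intros HU HV x. unfold Lmeet2. apply fle_antisym.
  - rewrite (HU x), (HV x). elim_join [c Hc]. elim_join [d Hd].
    add_le (compact_directed x c d Hc Hd). elim_join [b Hb]. intro_join (exist _ b Hb).
    apply fmeet_glb; [apply fmeet_glb | solve_meet].
    + eapply fle_trans; [|apply (scott_open_compact_le U c b HU Hc)]. solve_meet.
    + eapply fle_trans; [|apply (scott_open_compact_le V d b HV Hd)]. solve_meet.
  - apply join_le. intros [c Hc]. apply fmeet_glb.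
    + eapply fle_trans; [|apply (scott_open_compact_le U c x HU Hc)]. solve_meet.
    + eapply fle_trans; [|apply (scott_open_compact_le V c x HV Hc)]. solve_meet.
Qed.

Lemma scott_open_Lsupset S : (forall U, S U -> scott_open e U) -> scott_open e (Lsupset L S).
Proof.
  intros HS x. apply fle_antisym.
  - apply fsup_least. intros a [A [HA ->]].
    rewrite (HS A HA x). apply join_le. intros [c Hc]. intro_join (exist _ c Hc).
    apply fmeet_glb; [|solve_meet].
    eapply le_sup; [exists A; split; [exact HA | reflexivity]|]. solve_meet.
  - apply join_le. intros [c Hc]. unfold Lsupset. elim_sup a [A [HA ->]].
    eapply le_sup; [exists A; split; [exact HA | reflexivity]|].
    eapply fle_trans; [|apply (scott_open_compact_le A c x (HS A HA) Hc)]. solve_meet.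
Qed.

Lemma scott_open_const a : scott_open e (Lconst L P a).
Proof.
  intros x. apply fle_antisym.
  - add_le (le_join_compact a x). elim_join [c Hc]. intro_join (exist _ c Hc). solve_meet.
  - apply join_le. intros [c Hc]. solve_meet.
Qed.

Lemma scott_topology : is_Ltopology L (scott_open e).
Proof.
  split; [|split]; [apply scott_open_meet | apply scott_open_Lsupset | apply scott_open_const].
Qed.

Lemma specialization_scott x y : specialization (scott_open e) x y = e x y.
Proof.
  apply fle_antisym.
  - apply le_Lord_compact. intros c Hc. apply le_impE.
    apply (meetI_lb (fun A : {A | scott_open e A} => fimp (proj1_sig A x) (proj1_sig A y))
                    (exist _ (Lup e c) (scott_open_Lup c Hc))).
  - apply le_specialization. intros A HA. apply meetC_le, scott_open_upper, HA.
Qed.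

Lemma Lsub_Lup_scott_open A c : scott_open e A -> Lsub L (Lup e c) A = A c.
Proof. intros HA. apply (Lsub_Lup e Ho), scott_open_upper, HA. Qed.

Lemma Lup_super_compact c : K c -> super_compact L (scott_open e) (Lup e c).
Proof.
  intros Hc. split.
  - apply top_le. intro_join c. apply le_Lord_refl, Ho.
  - intros S HS. rewrite Lsub_Lup_scott_open by (apply scott_open_Lsupset, HS).
    apply fle_antisym.
    + apply fsup_least. intros a [V [HV ->]]. intro_join (exist _ V HV).
      rewrite Lsub_Lup_scott_open by (apply HS, HV). apply fle_refl.
    + apply join_le. intros [V HV]. cbn. rewrite Lsub_Lup_scott_open by (apply HS, HV).
      eapply le_sup; [exists V; split; [exact HV | reflexivity]|]. apply fle_refl.
Qed.

Lemma scott_slsc : strong_loc_super_compact L (scott_open e).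
Proof.
  exists (fun B => exists c, K c /\ B = Lup e c).
  assert (HBs : forall B, (exists c, K c /\ B = Lup e c) -> scott_open e B).
  { intros B [c [Hc ->]]. apply scott_open_Lup, Hc. }
  split; [split|].
  - exact HBs.
  - intros A HA x. apply fle_antisym.
    + rewrite (HA x). apply join_le. intros [c Hc].
      intro_join (exist (fun B => exists c, K c /\ B = Lup e c) (Lup e c)
                    (ex_intro _ c (conj Hc eq_refl))).
      rewrite Lsub_Lup_scott_open by exact HA. apply fle_refl.
    + apply join_le. intros [B [c [Hc ->]]]. cbn. rewrite Lsub_Lup_scott_open by exact HA.
      apply scott_open_compact_le; assumption.
  - intros B HB. split; [apply HBs, HB|]. destruct HB as [c [Hc ->]].
    apply Lup_super_compact, Hc.
Qed.

Lemma scott_point_eq p A : is_point L (scott_open e) p -> scott_open e A ->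
  p A = fjoin (fun c : {c | K c} => A (proj1_sig c) ⊓ p (Lup e (proj1_sig c))).
Proof.
  intros Hp HA. rewrite (scott_open_eta A HA) at 1.
  apply (point_join_family (scott_open e)); [apply scott_topology | exact Hp|].
  intros [c Hc]. apply scott_open_Lup, Hc.
Qed.

Lemma scott_point_directed p : is_point L (scott_open e) p ->
  Ldirected L e (compact_restrict e (fun y => p (Lup e y))).
Proof.
  intros Hp. split.
  - apply top_le. pose proof Hp as [_ [_ Pconst]].
    rewrite <- (Pconst ftop), (scott_point_eq p _ Hp (scott_open_const ftop)).
    apply join_le. intros [c Hc]. intro_join c.
    rewrite compact_restrict_eq by exact Hc. solve_meet.
  - intros y z. apply compact_restrict_meet_le. intros Hy.
    apply meetC_le, compact_restrict_meet_le. intros Hz.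
    pose proof Hp as [Pmeet _].
    rewrite <- Pmeet by (apply scott_open_Lup; assumption).
    rewrite (scott_point_eq p _ Hp
               (scott_open_meet _ _ (scott_open_Lup z Hz) (scott_open_Lup y Hy))).
    apply join_le. intros [c Hc]. intro_join c.
    rewrite compact_restrict_eq by exact Hc. unfold Lmeet2, Lup. solve_meet.
Qed.

Lemma scott_sober : Lsober L (scott_open e).
Proof.
  split.
  - intros x y H.
    apply (Lord_antisym e Ho); rewrite <- specialization_scott;
      apply top_le, le_specialization; intros A HA; rewrite (H A HA); solve_meet.
  - intros p Hp. set (D := compact_restrict e (fun y => p (Lup e y))).
    pose proof (scott_point_directed p Hp) as HD.
    destruct (proj1 Halg D HD) as [s Hs]. exists s. intros A HA.
    rewrite (scott_point_eq p A Hp HA), (scott_open_directed_sup A D s HA HD Hs).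
    apply fle_antisym.
    + apply join_le. intros [c Hc]. intro_join c. unfold D.
      rewrite compact_restrict_eq by exact Hc. solve_meet.
    + apply join_le. intros x. apply compact_restrict_meet_le. intros Hx.
      intro_join (exist _ x Hx). solve_meet.
Qed.
End ScottTopology.

Section SoberSpace.
Context {L : frame} {X : Type} (O : (X -> L) -> Prop) (Htop : is_Ltopology L O)
  (Hslsc : strong_loc_super_compact L O) (Hsob : Lsober L O).
Local Notation e := (specialization O).
Local Notation Ho := (specialization_Lorder O Hsob).

Lemma open_Lup_base A x : O A ->
  A x = fjoin (fun c : {c | O (Lup e c)} => A (proj1_sig c) ⊓ e (proj1_sig c) x).
Proof.
  intros HA. destruct Hslsc as [Bs [[HBo HBase] HBsc]]. apply fle_antisym.
  - rewrite (HBase A HA x). apply join_le. intros [B HB]. cbn.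
    destruct (super_compact_Lup O B Hsob (HBo B HB) (proj2 (HBsc B HB))) as [c ->].
    intro_join (exist (fun c => O (Lup e c)) c (HBo _ HB)).
    rewrite Lsub_Lup by (exact Ho || apply open_upper, HA). apply fle_refl.
  - apply join_le. intros [c Hc]. apply open_upper, HA.
Qed.

Lemma open_Lup_directed x b b' : O (Lup e b) -> O (Lup e b') ->
  e b x ⊓ e b' x ⊑ fjoin (fun c : {c | O (Lup e c)} =>
                            e b (proj1_sig c) ⊓ e b' (proj1_sig c) ⊓ e (proj1_sig c) x).
Proof.
  intros H1 H2. destruct Htop as [Hmeet _].
  apply fle_trans with (Lmeet2 L (Lup e b) (Lup e b') x); [apply fle_refl|].
  rewrite (open_Lup_base (Lmeet2 L (Lup e b) (Lup e b')) x (Hmeet _ _ H1 H2)).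
  apply fle_refl.
Qed.

Lemma le_join_open_Lup Z x : Z ⊑ fjoin (fun b : {b | O (Lup e b)} => e (proj1_sig b) x).
Proof.
  destruct Htop as [_ [_ Hconst]].
  apply fle_trans with (Lconst L X ftop x); [apply le_top|].
  rewrite (open_Lup_base (Lconst L X ftop) x (Hconst ftop)).
  apply join_le. intros b. intro_join b. solve_meet.
Qed.

Lemma directed_point D : Ldirected L e D -> is_point L O (Loverlap D).
Proof.
  intros HD. unfold Loverlap. split; [|split].
  - intros A B HA HB. apply fle_antisym.
    + apply join_le. intros x. unfold Lmeet2. apply fmeet_glb; intro_join x; solve_meet.
    + elim_join x. elim_join y. add_le (directed_meet_le e D x y HD). elim_join z.
      intro_join z. unfold Lmeet2. apply fmeet_glb; [solve_meet | apply fmeet_glb].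
      * eapply fle_trans; [|apply (open_upper O A HA x z)]. solve_meet.
      * eapply fle_trans; [|apply (open_upper O B HB y z)]. solve_meet.
  - intros S HS. apply fle_antisym.
    + apply join_le. intros x. unfold Lsupset. elim_sup a [A [HA ->]].
      eapply le_sup; [exists A; split; [exact HA | reflexivity]|]. intro_join x. solve_meet.
    + apply fsup_least. intros a [A [HA ->]]. apply join_le. intros x. intro_join x.
      apply fmeet_glb; [solve_meet|].
      eapply le_sup; [exists A; split; [exact HA | reflexivity]|]. solve_meet.
  - intros l. unfold Lconst. apply fle_antisym.
    + apply join_le. intros x. solve_meet.
    + add_le (le_directed_join e D l HD). elim_join x. intro_join x. solve_meet.
Qed.

Lemma directed_sup D : Ldirected L e D ->
  exists s, (forall A, O A -> A s = Loverlap D A) /\ is_Lsup L e D s.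
Proof.
  intros HD. destruct (proj2 Hsob _ (directed_point D HD)) as [s Hs].
  exists s. split; [intros A HA; symmetry; apply Hs, HA|].
  intros y. apply fle_antisym.
  - apply le_Lsub. intros x. apply le_specialization. intros A HA.
    assert (HAs : D x ⊓ A x ⊑ A s) by (rewrite <- (Hs A HA); intro_join x; apply fle_refl).
    add_le HAs. eapply fle_trans; [|apply (open_upper O A HA s y)]. solve_meet.
  - apply le_specialization. intros A HA. rewrite <- (Hs A HA). unfold Loverlap.
    apply meetC_le. elim_join x. add_le (Lsub_meet_le D (Ldown L e y) x).
    eapply fle_trans; [|apply (open_upper O A HA x y)]. solve_meet.
Qed.

Lemma open_Lup_compact c : O (Lup e c) -> Lcompact L e c.
Proof.
  intros Hoc. apply top_le, le_finf. intros a [I [s [HI [Hs ->]]]]. apply le_impI.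
  destruct (directed_sup I (proj1 HI)) as [s' [Hs'1 Hs'2]].
  assert (E : e c s' = Loverlap I (Lup e c)) by exact (Hs'1 _ Hoc).
  rewrite (Lsup_unique e Ho I s s' Hs Hs'2), E.
  apply meet_join_le. intros x. eapply fle_trans; [|apply (proj2 HI x c)]. solve_meet.
Qed.

Definition open_approx (x : X) : X -> L :=
  fun y => fjoin (fun b : {b | O (Lup e b)} => e (proj1_sig b) x ⊓ e y (proj1_sig b)).

Lemma open_approx_ge x b : O (Lup e b) -> e b x ⊑ open_approx x b.
Proof.
  intros Hb. intro_join (exist (fun c => O (Lup e c)) b Hb).
  apply fmeet_glb; [apply fle_refl | apply le_Lord_refl, Ho].
Qed.

Lemma open_approx_ideal x : Lideal L e (open_approx x).
Proof.
  split; [split|].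
  - apply top_le. eapply fle_trans; [apply (le_join_open_Lup ftop x)|].
    apply join_le. intros [b Hb]. apply le_join with (i := b), open_approx_ge, Hb.
  - intros y y'. unfold open_approx at 1 2. elim_join [b Hb]. elim_join [b' Hb'].
    add_le (open_Lup_directed x b b' Hb Hb'). elim_join [c Hc]. intro_join c.
    apply fmeet_glb; [|apply fmeet_glb].
    + eapply fle_trans; [|apply (open_approx_ge x c Hc)]. solve_meet.
    + add_le (Lord_trans e Ho y b c). solve_meet.
    + add_le (Lord_trans e Ho y' b' c). solve_meet.
  - intros y z. unfold open_approx. elim_join b. intro_join b. apply fmeet_glb; [solve_meet|].
    add_le (Lord_trans e Ho z y (proj1_sig b)). solve_meet.
Qed.

Lemma open_approx_sup x : is_Lsup L e (open_approx x) x.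
Proof.
  intros y. apply fle_antisym.
  - apply le_Lsub. intros z. unfold open_approx, Ldown. elim_join [b Hb].
    add_le (Lord_trans e Ho z b x). add_le (Lord_trans e Ho z x y). solve_meet.
  - apply le_specialization. intros A HA. rewrite (open_Lup_base A x HA).
    apply meet_join_le. intros [b Hb]. cbn.
    add_le (open_approx_ge x b Hb). add_le (Lsub_meet_le (open_approx x) (Ldown L e y) b).
    eapply fle_trans; [|apply (open_upper O A HA b y)]. solve_meet.
Qed.

(** By compactness [c] lies in the ideal [open_approx c], so [e(c, -)] is the
    union of the open sets [e(b, -)] weighted by [e(b, c) /\ e(c, b)]. *)
Lemma compact_open_Lup c : Lcompact L e c -> O (Lup e c).
Proof.
  intros Hc.
  assert (Hcc : ftop ⊑ open_approx c c).
  { eapply fle_trans;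
      [|apply (compact_ideal_le e c _ c Hc (open_approx_ideal c) (open_approx_sup c))].
    apply le_Lord_refl, Ho. }
  replace (Lup e c) with (fun x => fjoin (fun b : {b | O (Lup e b)} =>
      (e (proj1_sig b) c ⊓ e c (proj1_sig b)) ⊓ Lup e (proj1_sig b) x)).
  - apply open_join_family; [exact Htop|]. intros [b Hb]. exact Hb.
  - apply functional_extensionality. intros x. unfold Lup. apply fle_antisym.
    + apply join_le. intros b. add_le (Lord_trans e Ho c (proj1_sig b) x). solve_meet.
    + add_le Hcc. unfold open_approx. elim_join b. intro_join b.
      apply fmeet_glb; [solve_meet|]. add_le (Lord_trans e Ho (proj1_sig b) c x). solve_meet.
Qed.

Lemma specialization_algebraic : Lalgebraic L e.
Proof.
  split.
  - intros D HD. destruct (directed_sup D HD) as [s [_ Hs]]. exists s. exact Hs.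
  - intros x. split; [split|].
    + apply top_le. eapply fle_trans; [apply (le_join_open_Lup ftop x)|].
      apply join_le. intros [b Hb]. intro_join b.
      rewrite (Lk_eq e x b (open_Lup_compact b Hb)). apply fle_refl.
    + intros y z. apply (compact_restrict_meet_le e (Ldown L e x)). intros Hy.
      apply meetC_le, (compact_restrict_meet_le e (Ldown L e x)). intros Hz.
      add_le (open_Lup_directed x y z (compact_open_Lup y Hy) (compact_open_Lup z Hz)).
      elim_join [b Hb]. intro_join b. rewrite (Lk_eq e x b (open_Lup_compact b Hb)). solve_meet.
    + intros y. apply fle_antisym.
      * apply le_Lsub. intros z. unfold Ldown.
        add_le (compact_restrict_le e (Ldown L e x) z). add_le (Lord_trans e Ho z x y). solve_meet.
      * apply le_specialization. intros A HA. rewrite (open_Lup_base A x HA).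
        apply meet_join_le. intros [b Hb]. cbn.
        rewrite <- (Lk_eq e x b (open_Lup_compact b Hb)).
        add_le (Lsub_meet_le (Lk L e x) (Ldown L e y) b).
        eapply fle_trans; [|apply (open_upper O A HA b y)]. solve_meet.
Qed.

Lemma open_iff_scott_open A : O A <-> scott_open e A.
Proof.
  split.
  - intros HA x. apply fle_antisym.
    + rewrite (open_Lup_base A x HA) at 1. apply join_le. intros [b Hb].
      intro_join (exist (fun c => Lcompact L e c) b (open_Lup_compact b Hb)). apply fle_refl.
    + apply join_le. intros [c Hc]. apply open_upper, HA.
  - apply scott_open_open; [exact Htop|]. exact compact_open_Lup.
Qed.
End SoberSpace.

Section Morphisms.
Context {L : frame} {P Q : Type}
  (e1 : P -> P -> L) (Ho1 : is_Lorder L e1) (Halg1 : Lalgebraic L e1)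
  (e2 : Q -> Q -> L) (Ho2 : is_Lorder L e2) (Halg2 : Lalgebraic L e2) (f : P -> Q).

Lemma Lfwd_directed D : Lmonotone e1 e2 f -> Ldirected L e1 D -> Ldirected L e2 (Lfwd L f D).
Proof.
  intros Hmono HD. split.
  - apply top_le. eapply fle_trans; [apply (le_directed_join e1 D ftop HD)|].
    apply join_le. intros z. eapply fle_trans; [apply (Lfwd_ub f D z) | apply join_ub].
  - intros y1 y2. apply Lfwd_meet_le. intros z1 <-. apply meetC_le, Lfwd_meet_le. intros z2 <-.
    add_le (directed_meet_le e1 D z1 z2 HD). elim_join z. intro_join (f z).
    apply fmeet_glb; [|apply fmeet_glb].
    + eapply fle_trans; [|apply Lfwd_ub]. solve_meet.
    + eapply fle_trans; [|apply Hmono]. solve_meet.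
    + eapply fle_trans; [|apply Hmono]. solve_meet.
Qed.

Lemma scott_continuous_monotone : Scott_continuous L e1 e2 f -> Lmonotone e1 e2 f.
Proof.
  intros Hf z x.
  destruct (Hf _ (Ldown_directed e1 Ho1 x) x (Ldown_sup e1 Ho1 x)) as [s [Hs ->]].
  eapply fle_trans; [|apply (Lsup_ub e2 Ho2 _ s (f z) Hs)]. apply (Lfwd_ub f (Ldown L e1 x) z).
Qed.

Lemma scott_open_preimage_monotone :
  (forall U, scott_open e2 U -> scott_open e1 (Lbwd L f U)) -> Lmonotone e1 e2 f.
Proof.
  intros Hf z x. rewrite <- (specialization_scott e2 Ho2 Halg2).
  apply le_specialization. intros U HU. apply meetC_le.
  apply (scott_open_upper e1 Ho1 (Lbwd L f U) (Hf U HU)).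
Qed.

Lemma scott_open_preimage_scott_continuous :
  (forall U, scott_open e2 U -> scott_open e1 (Lbwd L f U)) -> Scott_continuous L e1 e2 f.
Proof.
  intros Hf D HD x Hx. exists (f x). split; [|reflexivity]. intros y. apply fle_antisym.
  - apply le_Lsub. intros y'. unfold Ldown. apply meetC_le, Lfwd_meet_le. intros z <-.
    add_le (Lsup_ub e1 Ho1 D x z Hx). add_le (scott_open_preimage_monotone Hf z x).
    add_le (Lord_trans e2 Ho2 (f z) (f x) y). solve_meet.
  - rewrite <- (specialization_scott e2 Ho2 Halg2). apply le_specialization. intros U HU.
    assert (E : U (f x) = Loverlap D (Lbwd L f U))
      by exact (scott_open_directed_sup e1 Ho1 (Lbwd L f U) D x (Hf U HU) HD Hx).
    rewrite E. unfold Loverlap. apply meet_join_le. intros z.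
    add_le (Lfwd_ub f D z). add_le (Lsub_meet_le (Lfwd L f D) (Ldown L e2 y) (f z)).
    eapply fle_trans; [|apply (scott_open_upper e2 Ho2 U HU (f z) y)]. solve_meet.
Qed.

Lemma scott_continuous_scott_open_preimage : Scott_continuous L e1 e2 f ->
  forall U, scott_open e2 U -> scott_open e1 (Lbwd L f U).
Proof.
  intros Hf U HU x. unfold Lbwd. apply fle_antisym.
  - destruct (Hf _ (Lk_directed e1 Halg1 x) x (Lk_sup e1 Halg1 x)) as [s [Hs ->]].
    assert (HD : Ldirected L e2 (Lfwd L f (Lk L e1 x)))
      by exact (Lfwd_directed _ (scott_continuous_monotone Hf) (Lk_directed e1 Halg1 x)).
    rewrite (scott_open_directed_sup e2 Ho2 U _ s HU HD Hs).
    apply join_le. intros y. apply Lfwd_meet_le. intros z <-.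
    apply (compact_restrict_meet_le e1 (Ldown L e1 x)). intros Hz.
    intro_join (exist _ z Hz). solve_meet.
  - apply join_le. intros [c Hc]. add_le (scott_continuous_monotone Hf c x).
    eapply fle_trans; [|apply (scott_open_upper e2 Ho2 U HU (f c) (f x))]. solve_meet.
Qed.
End Morphisms.

Section Isomorphism.
Context {L : frame}.

Definition AlgDom_of_space (X : SLSCSob L) : AlgDom L :=
  MkAlgDom L (sp_car X) (specialization (sp_open X))
    (specialization_Lorder _ (sp_sober L X))
    (specialization_algebraic _ (sp_top L X) (sp_slsc L X) (sp_sober L X)).

Definition space_of_AlgDom (P : AlgDom L) : SLSCSob L :=
  MkSLSCSob L (ad_car P) (scott_open (ad_ord P))
    (scott_topology _ (ad_alg L P)) (scott_slsc _ (ad_Lorder L P))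
    (scott_sober _ (ad_Lorder L P) (ad_alg L P)).

Lemma space_open_iff (X : SLSCSob L) A :
  sp_open X A <-> scott_open (specialization (sp_open X)) A.
Proof. apply open_iff_scott_open; [apply sp_top | apply sp_slsc | apply sp_sober]. Qed.

Lemma continuous_iff_scott_continuous (X Y : SLSCSob L) (f : sp_car X -> sp_car Y) :
  Lcontinuous L (sp_open X) (sp_open Y) f <->
  Scott_continuous L (ad_ord (AlgDom_of_space X)) (ad_ord (AlgDom_of_space Y)) f.
Proof.
  split.
  - intros Hf. apply (scott_open_preimage_scott_continuous _ (ad_Lorder L _)
                        _ (ad_Lorder L _) (ad_alg L (AlgDom_of_space Y))).
    intros U HU. apply space_open_iff, Hf, space_open_iff, HU.
  - intros Hf B HB. apply space_open_iff.
    apply (scott_continuous_scott_open_preimage _ (ad_Lorder L (AlgDom_of_space X))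
             (ad_alg L _) _ (ad_Lorder L (AlgDom_of_space Y)) f Hf).
    apply space_open_iff, HB.
Qed.

Definition scott_map (X Y : SLSCSob L) (f : SLSCSob_hom X Y) :
  AlgDom_hom (AlgDom_of_space X) (AlgDom_of_space Y) :=
  exist _ (proj1_sig f) (proj1 (continuous_iff_scott_continuous X Y _) (proj2_sig f)).

Definition continuous_map (X Y : SLSCSob L)
  (f : AlgDom_hom (AlgDom_of_space X) (AlgDom_of_space Y)) : SLSCSob_hom X Y :=
  exist _ (proj1_sig f) (proj2 (continuous_iff_scott_continuous X Y _) (proj2_sig f)).

Lemma SLSCSob_eq car (O O' : (car -> L) -> Prop) Htop Htop' Hslsc Hslsc' Hsob Hsob' :
  O = O' -> MkSLSCSob L car O Htop Hslsc Hsob = MkSLSCSob L car O' Htop' Hslsc' Hsob'.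
Proof. intros ->. f_equal; apply proof_irrelevance. Qed.

Lemma AlgDom_eq car (e e' : car -> car -> L) Ho Ho' Halg Halg' :
  e = e' -> MkAlgDom L car e Ho Halg = MkAlgDom L car e' Ho' Halg'.
Proof. intros ->. f_equal; apply proof_irrelevance. Qed.

Lemma space_of_AlgDom_of_space X : space_of_AlgDom (AlgDom_of_space X) = X.
Proof.
  destruct X as [car O Htop Hslsc Hsob]. apply SLSCSob_eq.
  apply functional_extensionality. intros A. apply propositional_extensionality.
  symmetry. apply (open_iff_scott_open O Htop Hslsc Hsob).
Qed.

Lemma AlgDom_of_space_of_AlgDom P : AlgDom_of_space (space_of_AlgDom P) = P.
Proof.
  destruct P as [car e Ho Halg]. apply AlgDom_eq.
  do 2 (apply functional_extensionality; intro). apply (specialization_scott e Ho Halg).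
Qed.
End Isomorphism.

Theorem theorem5p11 : forall L : frame, SLSCSob_AlgDom_isomorphic L.
Proof.
  intros L. exists AlgDom_of_space, scott_map. split; [|split; [|split]].
  - intros X i Hi p. apply Hi.
  - intros X Y Z f g h Hh p. apply Hh.
  - exists space_of_AlgDom.
    split; [apply space_of_AlgDom_of_space | apply AlgDom_of_space_of_AlgDom].
  - intros X Y. exists (continuous_map X Y).
    split; intros f; (apply eq_sig_hprop; [intros; apply proof_irrelevance | reflexivity]).
Qed.
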